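(* For all integers $n\geq 0$ and $p\geq 0$, \[ \sum_{j=0}^n \binom{p+j}{j}\binom{2(n-j)}{n-j}4^{j}O_{n-j} = 2^{2n-1}\binom{n+p+1}{n}\bigl(H_{n+p+1}-H_{p+1}\bigr) - \sum_{j=1}^n \binom{p+j}{j-1}4^{j-1}C_{n-j}\bigl(H_{p+j}-H_{p+1}\bigr). \] In particular, \[ \sum_{j=0}^n \binom{2j}{j}\frac{O_j}{4^j} = \frac{n+1}{2}\bigl(H_{n+1}-1\bigr) - \sum_{j=1}^n \frac{j\,C_{n-j}}{4^{n+1-j}}\bigl(H_j-1\bigr). \]
   Context: $H_n=\sum_{j=1}^n \frac1j$ is the $n$th harmonic number ($H_0=0$), $O_n=\sum_{j=1}^n\frac{1}{2j-1}$ is the $n$th odd harmonic number ($O_0=0$), and $C_n=\frac{1}{n+1}\binom{2n}{n}$ is the $n$th Catalan number. *)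

From mathcomp Require Import all_boot all_order all_algebra.
Set Implicit Arguments. Unset Strict Implicit. Unset Printing Implicit Defensive.
Import Order.TTheory GRing.Theory Num.Theory.
Local Open Scope ring_scope.

Definition harm (n : nat) : rat := \sum_(1 <= j < n.+1) (j%:R)^-1.

Definition oharm (n : nat) : rat := \sum_(1 <= j < n.+1) ((2 * j - 1)%N%:R)^-1.

Definition catalan (n : nat) : rat := 'C(2 * n, n)%:R / (n.+1)%:R.

(* Write m_s(n) for the coefficient of x^n in (1 - x)^(-s) and d_s(n) for its
   derivative in s, i.e. m_s(n) times the sum of 1/(s + k) over k < n.  Then
   C(p + j, j) = m_(p+1)(j), C(2k, k) = 4^k m_(1/2)(k),
   C_k = -2 4^k m_(-1/2)(k + 1), H_(q+n) - H_q = d_(q+1)(n) / m_(q+1)(n) and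
   2 O_n = d_(1/2)(n) / m_(1/2)(n).  Differentiating
   (1 - x)^(-a) (1 - x)^(-b) = (1 - x)^(-(a+b)) in a gives the convolution
   sum_j d_a(j) m_b(n - j) = d_(a+b)(n).  With (a, b) = (1/2, p + 1) the
   left-hand side is 4^n/2 d_(p+3/2)(n); with (a, b) = (p + 2, -1/2) the
   subtracted sum is 4^n/2 (d_(p+2)(n) - d_(p+3/2)(n)); and the first term on
   the right is 4^n/2 d_(p+2)(n).  The second identity is the case p = 0,
   reindexed by j -> n - j and divided by 4^n. *)

From mathcomp Require Import all_boot all_order all_algebra.
From mathcomp Require Import ring lra zify.

Set Implicit Arguments.
Unset Strict Implicit.
Unset Printing Implicit Defensive.
Import Order.TTheory GRing.Theory Num.Theory.
Local Open Scope ring_scope.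

Lemma mul_central_binS k :
  ('C(2 * k.+1, k.+1) * k.+1 = 2 * (2 * k).+1 * 'C(2 * k, k))%N.
Proof.
have sym : 'C((2 * k).+1, k) = 'C((2 * k).+1, k.+1).
  by rewrite -bin_sub; [congr 'C(_, _) |]; lia.
have -> : (2 * k.+1 = (2 * k).+2)%N by lia.
rewrite binS sym addnn -mul2n -!mulnA; congr (2 * _)%N.
by rewrite mulnC mul_bin_diag.
Qed.

Lemma expr_subnKC (R : pzSemiRingType) (x : R) m n :
  (m <= n)%N -> x ^+ n = x ^+ m * x ^+ (n - m).
Proof. by move=> le_mn; rewrite -exprD subnKC. Qed.

Section Convolution.
Variable R : comPzRingType.

(* Coefficientwise form of x (f g)' = (x f') g + f (x g'). *)
Lemma convolution_leibniz (A B : nat -> R) n :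
  n.+1%:R * \sum_(0 <= j < n.+2) A j * B (n.+1 - j)%N =
    \sum_(0 <= i < n.+1) (i.+1%:R * A i.+1) * B (n - i)%N
  + \sum_(0 <= i < n.+1) A i * ((n - i).+1%:R * B (n - i).+1).
Proof.
rewrite big_distrr /= (eq_big_nat _ _ (F2 := fun j =>
  (j%:R * A j) * B (n.+1 - j)%N + A j * ((n.+1 - j)%N%:R * B (n.+1 - j)%N))).
  2: move=> j /andP[_ lt_jn]; rewrite -{1}(subnKC (ltnSE lt_jn)) natrD; ring.
rewrite big_split /=; congr (_ + _).
  rewrite big_nat_recl //= !mul0r add0r.
  by apply: eq_bigr => i _; rewrite subSS.
rewrite big_nat_recr //= subnn !mul0r mulr0 addr0.
by apply: eq_big_nat => i /andP[_ lt_in]; rewrite subSn.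
Qed.

End Convolution.

Section Multichoose.
Variable R : numFieldType.
Implicit Types (s a b : R) (n : nat).

(* [mchoose s n] and [dmchoose s n] are m_s(n) and d_s(n); [dmchoose] is the
   derivative of [mchoose] in [s] only when no [s + k] vanishes. *)
Definition mchoose s n : R := \prod_(k < n) ((s + k%:R) / k.+1%:R).
Definition hsum s n : R := \sum_(k < n) (s + k%:R)^-1.
Definition dmchoose s n : R := mchoose s n * hsum s n.

Lemma mchoose0 s : mchoose s 0 = 1.
Proof. by rewrite /mchoose big_ord0. Qed.

Lemma hsum0 s : hsum s 0 = 0.
Proof. by rewrite /hsum big_ord0. Qed.

Lemma mchooseS s n : mchoose s n.+1 = mchoose s n * ((s + n%:R) / n.+1%:R).
Proof. by rewrite /mchoose big_ord_recr. Qed.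

Lemma hsumS s n : hsum s n.+1 = hsum s n + (s + n%:R)^-1.
Proof. by rewrite /hsum big_ord_recr. Qed.

Lemma mulrn_mchooseS s n : n.+1%:R * mchoose s n.+1 = (s + n%:R) * mchoose s n.
Proof. by rewrite mchooseS; field; rewrite nat1r pnatr_eq0. Qed.

Lemma mulrn_dmchooseS s n : s + n%:R != 0 ->
  n.+1%:R * dmchoose s n.+1 = (s + n%:R) * dmchoose s n + mchoose s n.
Proof.
by move=> nz_sn; rewrite /dmchoose mulrA mulrn_mchooseS hsumS; field.
Qed.

Lemma addr_nat_neq0 s k : 0 < s -> s + k%:R != 0.
Proof. by move=> s_gt0; rewrite gt_eqF // ltr_wpDr. Qed.

Lemma mchoose_vandermonde a b n :
  \sum_(0 <= j < n.+1) mchoose a j * mchoose b (n - j) = mchoose (a + b) n.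
Proof.
elim: n => [|n IHn]; first by rewrite big_nat1 !mchoose0 mulr1.
apply: (mulfI (x := n.+1%:R)); first by rewrite pnatr_eq0.
rewrite convolution_leibniz mulrn_mchooseS -IHn big_distrr -big_split /=.
apply: eq_big_nat => i /andP[_ lt_in].
rewrite mulrn_mchooseS mulrn_mchooseS natrB ?(ltnSE lt_in) //; ring.
Qed.

Lemma dmchoose_vandermonde a b n :
    (forall k, a + k%:R != 0) -> (forall k, a + b + k%:R != 0) ->
  \sum_(0 <= j < n.+1) dmchoose a j * mchoose b (n - j) = dmchoose (a + b) n.
Proof.
move=> nz_a nz_ab; elim: n => [|n IHn].
  by rewrite big_nat1 /dmchoose !hsum0 !mulr0 mul0r.
apply: (mulfI (x := n.+1%:R)); first by rewrite pnatr_eq0.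
rewrite convolution_leibniz mulrn_dmchooseS // -IHn -mchoose_vandermonde.
rewrite !big_distrr -!big_split /=.
apply: eq_big_nat => i /andP[_ lt_in].
rewrite mulrn_dmchooseS // mulrn_mchooseS natrB ?(ltnSE lt_in) //; ring.
Qed.

Lemma mulrn_mchoose_addr1 s n :
  n.+1%:R * mchoose s n.+1 = s * mchoose (s + 1) n.
Proof.
elim: n => [|n IHn]; first by rewrite mulrn_mchooseS !mchoose0 !mulr1 addr0.
apply: (mulfI (x := n.+1%:R)); first by rewrite pnatr_eq0.
rewrite mulrn_mchooseS mulrCA IHn [RHS]mulrCA mulrn_mchooseS; ring.
Qed.

Lemma mchoose_nat q n : mchoose q.+1%:R n = 'C(q + n, n)%:R.
Proof.
elim: n => [|n IHn]; first by rewrite mchoose0 bin0.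
apply: (mulfI (x := n.+1%:R)); first by rewrite pnatr_eq0.
by rewrite mulrn_mchooseS IHn -natrD -!natrM addnS -mul_bin_diag addSn.
Qed.

Lemma mchoose_half n : 4 ^+ n * mchoose 2^-1 n = 'C(2 * n, n)%:R.
Proof.
elim: n => [|n IHn]; first by rewrite mchoose0 mulr1 muln0 bin0.
apply: (mulfI (x := n.+1%:R)); first by rewrite pnatr_eq0.
rewrite mulrCA mulrn_mchooseS -natrM [(n.+1 * _)%N]mulnC mul_central_binS.
by rewrite !natrM -IHn exprS; field.
Qed.

End Multichoose.

Lemma harmS n : harm n.+1 = harm n + n.+1%:R^-1.
Proof. by rewrite /harm big_nat_recr. Qed.

Lemma harm1 : harm 1 = 1.
Proof. by rewrite /harm big_nat1 invr1. Qed.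

Lemma oharmS n : oharm n.+1 = oharm n + (2 * n).+1%:R^-1.
Proof. by rewrite /oharm big_nat_recr //= mulnS. Qed.

Lemma hsum_nat q n : hsum q.+1%:R n = harm (q + n) - harm q.
Proof.
elim: n => [|n IHn]; first by rewrite hsum0 addn0 subrr.
by rewrite hsumS IHn addnS harmS -natrD addSn; ring.
Qed.

Lemma hsum_half n : hsum 2^-1 n = 2 * oharm n.
Proof.
elim: n => [|n IHn]; first by rewrite hsum0 /oharm big_geq ?mulr0.
rewrite hsumS IHn oharmS -[(2 * n).+1]addn1 natrD natrM.
have n_ge0 : 0 <= n%:R :> rat by [].
by field; rewrite gt_eqF //; lra.
Qed.

Lemma catalan_mchoose m : catalan m = - 2 * 4 ^+ m * mchoose (- 2^-1) m.+1.
Proof.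
have half : - 2^-1 + 1 = 2^-1 :> rat by field.
apply: (mulfI (x := m.+1%:R)); first by rewrite pnatr_eq0.
rewrite mulrCA [RHS]mulrCA mulrn_mchoose_addr1 half /catalan -mchoose_half.
by field; rewrite nat1r pnatr_eq0.
Qed.

Lemma sum_bin_central_bin_oharm_dmchoose n p :
  \sum_(0 <= j < n.+1)
      'C(p + j, j)%:R * 'C(2 * (n - j), n - j)%:R * 4 ^+ j * oharm (n - j)
  = 4 ^+ n / 2 * dmchoose (2^-1 + p.+1%:R) n :> rat.
Proof.
have half_gt0 : 0 < 2^-1 :> rat by [].
rewrite -dmchoose_vandermonde => [|k|k]; last 2 first.
- exact: addr_nat_neq0.
- by apply: addr_nat_neq0; rewrite ltr_wpDr.
rewrite big_distrr big_nat_rev /=.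
apply: eq_big_nat => j /andP[_ lt_jn].
have le_jn := ltnSE lt_jn.
rewrite add0n subSS subKn // /dmchoose hsum_half -mchoose_nat -mchoose_half.
by rewrite (expr_subnKC 4 le_jn); field.
Qed.

Lemma sum_bin_catalan_harm_dmchoose n p :
  \sum_(1 <= j < n.+1)
      'C(p + j, j - 1)%:R * 4 ^+ (j - 1) * catalan (n - j)
        * (harm (p + j) - harm (p + 1))
  = 4 ^+ n / 2 * (dmchoose p.+2%:R n - dmchoose (2^-1 + p.+1%:R) n) :> rat.
Proof.
have shift : 2^-1 + p.+1%:R = p.+2%:R + - 2^-1 :> rat.
  by rewrite -[p.+2]addn1 natrD; field.
rewrite shift -(dmchoose_vandermonde (a := p.+2%:R)) => [|k|k]; last 2 first.
- exact: addr_nat_neq0.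
- by apply: addr_nat_neq0; rewrite -shift ltr_wpDr.
rewrite [X in _ - X]big_nat_recr //= subnn mchoose0 mulr1.
rewrite opprD addrCA subrr addr0 mulrN -mulNr big_add1 big_distrr /=.
apply: eq_big_nat => i /andP[_ lt_in].
rewrite subn1 /= catalan_mchoose subnSK // -addSnnS addn1 -mchoose_nat.
rewrite -hsum_nat /dmchoose.
by rewrite (expr_subnKC 4 lt_in) exprS; field.
Qed.

Lemma bin_harm_dmchoose n p :
  'C(n + p + 1, n)%:R * (harm (n + p + 1) - harm (p + 1)) = dmchoose p.+2%:R n.
Proof. by rewrite /dmchoose mchoose_nat hsum_nat !addn1 addSn addnC. Qed.

Lemma exp2Mn n : 2 ^+ (2 * n) = 4 ^+ n :> rat.
Proof. by rewrite exprM; congr (_ ^+ _); ring. Qed.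

Lemma sum_bin_central_bin_oharm n p :
  \sum_(0 <= j < n.+1)
      'C(p + j, j)%:R * 'C(2 * (n - j), n - j)%:R * 4 ^+ j * oharm (n - j)
  = (2 ^+ (2 * n) / 2) * 'C(n + p + 1, n)%:R * (harm (n + p + 1) - harm (p + 1))
    - \sum_(1 <= j < n.+1)
        'C(p + j, j - 1)%:R * 4 ^+ (j - 1) * catalan (n - j)
          * (harm (p + j) - harm (p + 1)) :> rat.
Proof.
rewrite sum_bin_central_bin_oharm_dmchoose sum_bin_catalan_harm_dmchoose.
by rewrite -[_ * 'C(_, _)%:R * _]mulrA bin_harm_dmchoose exp2Mn; ring.
Qed.

Lemma sum_central_bin_oharm n :
  \sum_(0 <= j < n.+1) 'C(2 * j, j)%:R * oharm j / 4 ^+ j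
  = (n.+1)%:R / 2 * (harm n.+1 - 1)
    - \sum_(1 <= j < n.+1)
        j%:R * catalan (n - j) / 4 ^+ (n.+1 - j) * (harm j - 1) :> rat.
Proof.
have nz4 : 4 ^+ n != 0 :> rat by rewrite expf_neq0.
apply: (mulfI nz4); rewrite mulrBr.
(* Both sums are brought to the p = 0 instance of sum_bin_central_bin_oharm
   verbatim, so that it can be rewritten with. *)
have -> : 4 ^+ n * \sum_(0 <= j < n.+1) 'C(2 * j, j)%:R * oharm j / 4 ^+ j
    = \sum_(0 <= j < n.+1)
        'C(0 + j, j)%:R * 'C(2 * (n - j), n - j)%:R * 4 ^+ j * oharm (n - j).
  rewrite big_distrr [RHS]big_nat_rev /=.
  apply: eq_big_nat => j /andP[_ lt_jn].
  rewrite add0n subSS subKn ?(ltnSE lt_jn) // binn.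
  by rewrite (expr_subnKC 4 (ltnSE lt_jn)); field; rewrite expf_neq0.
have -> : 4 ^+ n * \sum_(1 <= j < n.+1)
        j%:R * catalan (n - j) / 4 ^+ (n.+1 - j) * (harm j - 1)
    = \sum_(1 <= j < n.+1)
        'C(0 + j, j - 1)%:R * 4 ^+ (j - 1) * catalan (n - j)
          * (harm (0 + j) - harm (0 + 1)).
  rewrite big_distrr /=; apply: eq_big_nat => -[//|i] /andP[_ lt_in].
  rewrite add0n !subSS subn0 binSn harm1.
  by rewrite (expr_subnKC 4 (ltnW (ltnSE lt_in))); field; rewrite expf_neq0.
rewrite sum_bin_central_bin_oharm addn0 addn1 binSn exp2Mn harm1.
by ring.
Qed.

Theorem theorem6 :
  (forall n p : nat,
    \sum_(0 <= j < n.+1)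
        'C(p + j, j)%:R * 'C(2 * (n - j), n - j)%:R * 4 ^+ j * oharm (n - j)
    = (2 ^+ (2 * n) / 2) * 'C(n + p + 1, n)%:R * (harm (n + p + 1) - harm (p + 1))
      - \sum_(1 <= j < n.+1)
          'C(p + j, j - 1)%:R * 4 ^+ (j - 1) * catalan (n - j)
            * (harm (p + j) - harm (p + 1)) :> rat)
  /\
  (forall n : nat,
    \sum_(0 <= j < n.+1) 'C(2 * j, j)%:R * oharm j / 4 ^+ j
    = (n.+1)%:R / 2 * (harm n.+1 - 1)
      - \sum_(1 <= j < n.+1)
          j%:R * catalan (n - j) / 4 ^+ (n.+1 - j) * (harm j - 1) :> rat).
Proof.
split; [exact: sum_bin_central_bin_oharm | exact: sum_central_bin_oharm].
Qed.
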